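(* Let $G$ be a compact Hausdorff group with normalized Haar measure $m_G$, and let $\Phi$ be a Young function satisfying the $\Delta_2$-condition. Let $\mathscr{F}_{\Phi,0}:L^\Phi(G)\to c_0\text{-}\bigoplus_{[\pi]\in\widehat{G}}\mathcal{B}_2(\mathcal{H}_\pi)$ be the Fourier transform $f\mapsto\widehat f$, and let $\nu_{\Phi,0}:\mathcal{B}(G)\to c_0\text{-}\bigoplus_{[\pi]\in\widehat{G}}\mathcal{B}_2(\mathcal{H}_\pi)$ be the vector measure $\nu_{\Phi,0}(A)=\widehat{\chi_A}$. Then $\nu_{\Phi,0}$ has finite variation, and its variation coincides with the Haar measure: $|\nu_{\Phi,0}|(A)=m_G(A)$ for every Borel set $A\subseteq G$.
   Context: $\mathcal{B}(G)$ is the Borel $\sigma$-algebra of $G$. A Young function is a convex $\Phi:[0,\infty]\to[0,\infty]$ with $\Phi(0)=0$ and $\lim_{x\to\infty}\Phi(x)=\infty$; it satisfies the $\Delta_2$-condition if there are $K>0$, $x_0>0$ with $\Phi(2x)\le K\Phi(x)$ for all $x\ge x_0$. $L^\Phi(G)$ is the space of (classes of) complex measurable functions $f$ with finite Luxemburg norm $\|f\|_\Phi=\inf\{k>0:\int_G\Phi(|f|/k)\,dm_G\le1\}$; it is contained in $L^1(G)$. $\widehat G$ is the set of equivalence classes of irreducible unitary representations $\pi$ of $G$ on (finite-dimensional) Hilbert spaces $\mathcal{H}_\pi$ of dimension $d_\pi$; for $f\in L^1(G)$, $\widehat f(\pi)=\int_G f(t)\pi(t)^*\,dm_G(t)$.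 $\mathcal{B}_2(\mathcal{H}_\pi)$ denotes the operators on $\mathcal{H}_\pi$, normed by the operator norm. The space $c_0\text{-}\bigoplus_{[\pi]}\mathcal{B}_2(\mathcal{H}_\pi)$ consists of families $(x_{[\pi]})$ with $x_{[\pi]}\in\mathcal{B}_2(\mathcal{H}_\pi)$ such that for every $\varepsilon>0$ only finitely many $[\pi]$ have $\|x_{[\pi]}\|\ge\varepsilon$, with norm $\sup_{[\pi]}\|x_{[\pi]}\|$. For a vector measure $\nu$ with values in a Banach space $X$, its variation is $|\nu|(A)=\sup\sum_{E\in\rho}\|\nu(E)\|$, the supremum over finite Borel partitions $\rho$ of $A$. *)

From HB Require Import structures.
From mathcomp Require Import all_boot all_order all_algebra.
From mathcomp Require Import all_classical all_reals all_analysis.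
From mathcomp Require Import complex.
Set Implicit Arguments. Unset Strict Implicit. Unset Printing Implicit Defensive.
Import Order.TTheory GRing.Theory Num.Theory.
Import numFieldNormedType.Exports.
Local Open Scope classical_set_scope.
Local Open Scope ring_scope.

Definition borel (G : ptopologicalType) := g_sigma_algebraType (@open G).
Definition borel_set (G : ptopologicalType) (A : set G) : Prop :=
  @measurable _ (borel G) A.

Definition compact_hausdorff_group (G : ptopologicalType)
  (mul : G -> G -> G) (inv : G -> G) (e : G) : Prop :=
  [/\ (forall x y z, mul x (mul y z) = mul (mul x y) z),
      (forall x, mul e x = x /\ mul x e = x),
      (forall x, mul (inv x) x = e /\ mul x (inv x) = e),
      continuous (fun p : G * G => mul p.1 p.2) /\ continuous inv &
      hausdorff_space G /\ compact [set: G] ].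

Definition normalized_haar (R : realType) (G : ptopologicalType)
  (mul : G -> G -> G) (m : {measure set (borel G) -> \bar R}) : Prop :=
  [/\ m setT = 1%E,
      (forall (x : G) (A : set G), borel_set A -> m [set mul x a | a in A] = m A),
      (forall A : set G, borel_set A ->
          m A = ereal_inf [set m U | U in [set U : set G | open U /\ A `<=` U]]) &
      (forall A : set G, borel_set A ->
          m A = ereal_sup [set m K | K in [set K : set G | compact K /\ K `<=` A]])].

Definition young_function (R : realType) (Phi : R -> \bar R) : Prop :=
  [/\ Phi 0 = 0%E,
      (forall x : R, 0 <= x -> (0 <= Phi x)%E),
      (forall x y t : R, 0 <= x -> 0 <= y -> 0 <= t <= 1 ->
         (Phi (t * x + (1 - t) * y)%R <= t%:E * Phi x + (1 - t)%:E * Phi y)%E) &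
      Phi x @[x --> +oo] --> +oo%E].

Definition delta2 (R : realType) (Phi : R -> \bar R) : Prop :=
  exists K x0 : R, [/\ 0 < K, 0 < x0 &
    forall x : R, x0 <= x -> (Phi (2 * x)%R <= K%:E * Phi x)%E].

Local Open Scope complex_scope.

Definition unitary_rep (R : realType) (G : ptopologicalType)
  (mul : G -> G -> G) (e : G) (d : nat) (pi : G -> 'M[R[i]]_d) : Prop :=
  [/\ pi e = 1%:M,
      (forall x y, pi (mul x y) = pi x *m pi y)%R,
      (forall x, pi x *m (map_mx conjc (pi x))^T = 1%:M)%R &
      (forall i j, continuous (fun x => complex.Re (pi x i j)) /\
                   continuous (fun x => complex.Im (pi x i j)))].

(* A subspace of column vectors C^d is encoded as the span of the
   (transposed) rows of U; pi x acts on column vectors v by v |-> pi x *m v. *)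
Definition irreducible_unitary_rep (R : realType) (G : ptopologicalType)
  (mul : G -> G -> G) (e : G) (d : nat) (pi : G -> 'M[R[i]]_d) : Prop :=
  [/\ unitary_rep mul e pi, (0 < d)%N &
      forall U : 'M[R[i]]_d,
        (forall x, (U *m (pi x)^T <= U)%MS) -> (U == (0 : 'M[R[i]]_d))%MS \/ (U == 1%:M)%MS].

(* Fourier coefficient of the indicator of A: \int_A pi(t)^* dm(t) *)
Definition fourier_ind (R : realType) (G : ptopologicalType)
  (m : {measure set (borel G) -> \bar R}) (d : nat) (pi : G -> 'M[R[i]]_d)
  (A : set G) : 'M[R[i]]_d :=
  \matrix_(i, j)
    ((Rintegral m A (fun t : borel G => complex.Re (conjc (pi t j i))))
       +i* (Rintegral m A (fun t : borel G => complex.Im (conjc (pi t j i))))).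

Definition vnorm (R : realType) (d : nat) (v : 'cV[R[i]]_d) : R :=
  Num.sqrt (\sum_(i < d) (complex.Re (v i ord0) ^+ 2 + complex.Im (v i ord0) ^+ 2))%R.

Definition opnorm (R : realType) (d : nat) (M : 'M[R[i]]_d) : \bar R :=
  ereal_sup [set (vnorm (M *m v))%:E | v in [set v : 'cV[R[i]]_d | vnorm v <= 1]]%R.

(* norm of nu(A) = hat(chi_A) in c_0-(+)_{[pi]} B_2(H_pi):
   sup over (representatives of) classes of irreducible unitary reps *)
Definition nu_norm (R : realType) (G : ptopologicalType)
  (mul : G -> G -> G) (e : G) (m : {measure set (borel G) -> \bar R})
  (A : set G) : \bar R :=
  ereal_sup [set r | exists (d : nat) (pi : G -> 'M[R[i]]_d),
     irreducible_unitary_rep mul e pi /\ r = opnorm (fourier_ind m pi A)].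

Definition nu_variation (R : realType) (G : ptopologicalType)
  (mul : G -> G -> G) (e : G) (m : {measure set (borel G) -> \bar R})
  (A : set G) : \bar R :=
  ereal_sup [set r | exists (n : nat) (E : 'I_n -> set G),
     [/\ (forall k, borel_set (E k)),
         (forall k l, k != l -> E k `&` E l = set0),
         \bigcup_(k in [set: 'I_n]) E k = A &
         r = (\sum_(k < n) nu_norm mul e m (E k))%E]].

From HB Require Import structures.
From mathcomp Require Import all_boot all_order all_algebra.
From mathcomp Require Import all_classical all_reals all_analysis.
From mathcomp Require Import complex measurable_realfun ring.
Import Order.TTheory GRing.Theory Num.Theory.
Import numFieldNormedType.Exports.
Local Open Scope classical_set_scope.
Local Open Scope ring_scope.
Set Implicit Arguments. Unset Strict Implicit.

(* The trivial representation gives ||nu(A)|| >= m(A).  Conversely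
   nu(A)_pi = \int_A pi(t)^* dm(t) integrates unitaries, so for |v| <= 1 and
   w := nu(A)_pi v we get |w|^2 = \int_A Re<w, pi(t)^* v> dm, and the pointwise
   bound 2 Re<w, u> <= |w|^2 / l + l |u|^2 with l = |w| yields |w| <= m(A).
   Hence ||nu(A)|| = m(A) for every Borel set A, and the variation of nu over
   any finite Borel partition of A is the sum of the Haar measures of its
   pieces, i.e. m(A) <= m(G) = 1. *)

(* Num.Theory exports a [Re] valued in a closed field itself; here [Re] and
   [Im] are the real-valued projections of [R[i]]. *)
Local Notation Re := (@complex.Re _).
Local Notation Im := (@complex.Im _).

Section ComplexVectors.
Variable R : rcfType.
Implicit Types (x y : R[i]).

Lemma ReD_complex x y : Re (x + y) = Re x + Re y. Proof. by case: x; case: y. Qed.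
Lemma ReM_complex x y : Re (x * y) = Re x * Re y - Im x * Im y.
Proof. by case: x; case: y. Qed.
Lemma ReJ_complex x : Re (conjc x) = Re x. Proof. by case: x. Qed.
Lemma ImJ_complex x : Im (conjc x) = - Im x. Proof. by case: x. Qed.

Lemma Re_complex_sum (I : Type) (r : seq I) (F : I -> R[i]) :
  Re (\sum_(i <- r) F i) = \sum_(i <- r) Re (F i).
Proof. by elim/big_rec2: _ => // i y1 y2 _ <-; rewrite ReD_complex. Qed.

Definition adjmx m n (M : 'M[R[i]]_(m, n)) : 'M[R[i]]_(n, m) :=
  (map_mx conjc M)^T.

Lemma adjmxK m n (M : 'M[R[i]]_(m, n)) : adjmx (adjmx M) = M.
Proof. by apply/matrixP => i j; rewrite !mxE conjcK. Qed.

Lemma adjmx_mul m n p (A : 'M[R[i]]_(m, n)) (B : 'M[R[i]]_(n, p)) :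
  adjmx (A *m B) = adjmx B *m adjmx A.
Proof. by rewrite /adjmx map_mxM trmx_mul. Qed.

Definition sqnorm d (u : 'cV[R[i]]_d) : R :=
  \sum_(i < d) (Re (u i ord0) ^+ 2 + Im (u i ord0) ^+ 2).

Definition rdot d (w u : 'cV[R[i]]_d) : R := Re ((adjmx w *m u) ord0 ord0).

Lemma rdotE d (w u : 'cV[R[i]]_d) :
  rdot w u = \sum_(i < d)
    (Re (w i ord0) * Re (u i ord0) + Im (w i ord0) * Im (u i ord0)).
Proof.
rewrite /rdot mxE Re_complex_sum; apply: eq_bigr => i _.
by rewrite !mxE ReM_complex ReJ_complex ImJ_complex mulNr opprK.
Qed.

Lemma rdot_self d (u : 'cV[R[i]]_d) : rdot u u = sqnorm u.
Proof. by rewrite rdotE; apply: eq_bigr => i _; rewrite !expr2. Qed.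

Lemma sqnorm_ge0 d (u : 'cV[R[i]]_d) : 0 <= sqnorm u.
Proof. by apply: sumr_ge0 => i _; apply: addr_ge0; apply: sqr_ge0. Qed.

Lemma sqnorm_adjmx_unitary d (U : 'M[R[i]]_d) (v : 'cV[R[i]]_d) :
  U *m adjmx U = 1%:M -> sqnorm (adjmx U *m v) = sqnorm v.
Proof.
move=> hU; rewrite -!rdot_self /rdot adjmx_mul adjmxK.
by rewrite mulmxA -(mulmxA _ U) hU mulmx1.
Qed.

Lemma rdot_le_sqnorm d (w u : 'cV[R[i]]_d) (l : R) :
  0 < l -> 2 * rdot w u <= sqnorm w / l + l * sqnorm u.
Proof.
move=> l0; rewrite rdotE /sqnorm mulr_sumr mulr_suml mulr_sumr -big_split /=.
apply: ler_sum => i _.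
set a := Re (w i ord0); set b := Re (u i ord0).
set c := Im (w i ord0); set e := Im (u i ord0).
rewrite -subr_ge0.
have -> : (a ^+ 2 + c ^+ 2) / l + l * (b ^+ 2 + e ^+ 2) - 2 * (a * b + c * e)
   = ((a - l * b) ^+ 2 + (c - l * e) ^+ 2) / l by field; rewrite gt_eqF.
by rewrite divr_ge0 ?addr_ge0 ?sqr_ge0 ?ltW.
Qed.

Lemma rdot_mulmxE d (w v : 'cV[R[i]]_d) (N : 'M[R[i]]_d) :
  rdot w (N *m v) =
  \sum_(i < d) \sum_(j < d) Re (conjc (w i ord0) * v j ord0 * N i j).
Proof.
rewrite /rdot mxE Re_complex_sum; apply: eq_bigr => i _.
rewrite !mxE mulr_sumr Re_complex_sum; apply: eq_bigr => j _.
by congr Re; ring.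
Qed.

End ComplexVectors.

Section MatrixIntegral.
Context d (T : measurableType d) (R : realType) (mu : {measure set T -> \bar R}).
Variables (D : set T) (mD : measurable D).
Local Notation integrableR f := (mu.-integrable D (EFin \o f)).

Lemma integrable_sumr (I : Type) (s : seq I) (f : I -> T -> R) :
  (forall i, integrableR (f i)) -> integrableR (fun t => \sum_(i <- s) f i t).
Proof.
move=> intf.
apply: eq_integrable (integrable_sum mD s (fun i (_ : true) => intf i)) => // t _.
exact: sumEFin.
Qed.

Lemma Rintegral_sum (I : Type) (s : seq I) (f : I -> T -> R) :
  (forall i, integrableR (f i)) ->
  \int[mu]_(t in D) \sum_(i <- s) f i t = \sum_(i <- s) \int[mu]_(t in D) f i t.
Proof.
move=> intf; rewrite /Rintegral.
under eq_integral do rewrite -sumEFin.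
rewrite integral_sum // -sum_fine // => i _.
by apply: integrable_fin_num => //; exact: intf.
Qed.

Lemma integrableR_cst (c : R) : (mu D < +oo)%E -> integrableR (fun=> c).
Proof.
by move=> muD; apply: measurable_bounded_integrable => //; exact: bounded_cst.
Qed.

Lemma integrableR_scale (c : R) (f : T -> R) :
  integrableR f -> integrableR (fun t => c * f t).
Proof. by move=> intf; apply: eq_integrable (integrableZl mD c intf). Qed.

Lemma integrable_Re_mulc (c : R[i]) (f : T -> R[i]) :
  integrableR (Re \o f) -> integrableR (Im \o f) ->
  integrableR (fun t => Re (c * f t)).
Proof.
move=> iRe iIm; apply: eq_integrable (integrableB mD (integrableZl mD (Re c) iRe)
  (integrableZl mD (Im c) iIm)) => // t _.
by rewrite /= ReM_complex EFinB.
Qed.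

Lemma Rintegral_Re_mulc (c : R[i]) (f : T -> R[i]) :
  integrableR (Re \o f) -> integrableR (Im \o f) ->
  \int[mu]_(t in D) Re (c * f t) =
  Re (c * (\int[mu]_(t in D) Re (f t) +i* \int[mu]_(t in D) Im (f t))%C).
Proof.
move=> iRe iIm; under eq_Rintegral do rewrite ReM_complex.
rewrite RintegralB ?RintegralZl ?ReM_complex //.
- exact: integrableR_scale.
- exact: integrableR_scale.
Qed.

Definition mx_Rintegral m n (P : T -> 'M[R[i]]_(m, n)) : 'M[R[i]]_(m, n) :=
  \matrix_(i, j)
    (\int[mu]_(t in D) Re (P t i j) +i* \int[mu]_(t in D) Im (P t i j))%C.

Definition mx_integrable m n (P : T -> 'M[R[i]]_(m, n)) :=
  forall i j,
    integrableR (fun t => Re (P t i j)) /\ integrableR (fun t => Im (P t i j)).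

Section Bilinear.
Variables (n : nat) (P : T -> 'M[R[i]]_n) (w v : 'cV[R[i]]_n).
Hypothesis intP : mx_integrable P.

Let integrable_Re_mul_entry i j c : integrableR (fun t => Re (c * P t i j)).
Proof. exact: integrable_Re_mulc (intP i j).1 (intP i j).2. Qed.

Lemma integrable_rdot_mulmx : integrableR (fun t => rdot w (P t *m v)).
Proof.
apply: eq_integrable (integrable_sumr _ _) => [//|t _|i].
  by rewrite /= rdot_mulmxE.
by apply: integrable_sumr => j; exact: integrable_Re_mul_entry.
Qed.

Lemma Rintegral_rdot_mulmx :
  \int[mu]_(t in D) rdot w (P t *m v) = rdot w (mx_Rintegral P *m v).
Proof.
under eq_Rintegral do rewrite rdot_mulmxE.
rewrite rdot_mulmxE Rintegral_sum => [|i]; last first.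
  by apply: integrable_sumr => j; exact: integrable_Re_mul_entry.
apply: eq_bigr => i _.
rewrite Rintegral_sum => [|j]; last exact: integrable_Re_mul_entry.
by apply: eq_bigr => j _; rewrite Rintegral_Re_mulc ?mxE //; case: (intP i j).
Qed.

End Bilinear.

Section Contraction.
Variables (n : nat) (P : T -> 'M[R[i]]_n).
Hypotheses (muD : (mu D < +oo)%E) (intP : mx_integrable P).
Hypothesis contrP : forall t v, D t -> sqnorm (P t *m v) <= sqnorm v.

Lemma vnorm_mx_Rintegral_le (v : 'cV[R[i]]_n) :
  vnorm v <= 1 -> vnorm (mx_Rintegral P *m v) <= fine (mu D).
Proof.
move=> v1; have muD0 : 0 <= fine (mu D) by rewrite fine_ge0.
have {}v1 : sqnorm v <= 1 by rewrite -ler_sqrt ?ler01 // sqrtr1.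
set w := mx_Rintegral P *m v; set s := vnorm w.
have [s0|s_gt0] := eqVneq s 0; first by rewrite s0.
have {}s_gt0 : 0 < s by rewrite lt_neqAle eq_sym s_gt0 sqrtr_ge0.
have sqnorm_w : sqnorm w = s ^+ 2 by rewrite sqr_sqrtr ?sqnorm_ge0.
have pointwise_bound t : D t -> 2 * rdot w (P t *m v) <= 2 * s.
  move=> Dt; apply: le_trans (rdot_le_sqnorm _ _ s_gt0) _.
  rewrite sqnorm_w expr2 mulfK ?gt_eqF // mulr_natl mulr2n lerD2l.
  by rewrite ger_pMr // (le_trans (contrP v Dt) v1).
have : 2 * s ^+ 2 <= 2 * s * fine (mu D).
  rewrite -sqnorm_w -rdot_self -Rintegral_rdot_mulmx // -RintegralZl //;
    last exact: integrable_rdot_mulmx.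
  rewrite -Rintegral_cst //; apply: (le_Rintegral mD _ _ pointwise_bound).
  - by apply: integrableR_scale; exact: integrable_rdot_mulmx.
  - exact: integrableR_cst.
by rewrite -mulrA ler_pM2l // expr2 ler_pM2l.
Qed.

Lemma opnorm_mx_Rintegral_le : (opnorm (mx_Rintegral P) <= mu D)%E.
Proof.
have muD_fin : mu D \is a fin_num by rewrite ge0_fin_numE.
apply: ge_ereal_sup => _ [v v1 <-].
by rewrite -(fineK muD_fin) lee_fin vnorm_mx_Rintegral_le.
Qed.

End Contraction.

End MatrixIntegral.

Lemma continuous_borel_measurable (R : realType) (G : ptopologicalType)
  (f : G -> R) :
  continuous f -> measurable_fun [set: borel G] (f : borel G -> R).
Proof.
move=> /continuousP cf; apply: (measurability _ (RGenOpens.measurableE R)).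
move=> _ [_ [a [b ->] <-]]; rewrite setTI.
by apply: sub_sigma_algebra; apply: cf; exact: interval_open.
Qed.

Section CompactGroup.
Variables (R : realType) (G : ptopologicalType) (mul : G -> G -> G) (e : G).
Variable m : {measure set (borel G) -> \bar R}.
Hypothesis compactG : compact [set: G].

Lemma continuous_integrable (A : set G) (f : G -> R) :
  borel_set A -> (m A < +oo)%E -> continuous f ->
  m.-integrable A (EFin \o (f : borel G -> R)).
Proof.
move=> mA mAoo cf; apply: measurable_bounded_integrable => //.
  exact: measurable_funS (continuous_borel_measurable cf).
have := continuous_compact (continuous_subspaceT cf) compactG.
move=> /compact_bounded[M [Mreal fM]].
by exists M; split => // N MN x Ax; apply: fM => //; exists x.
Qed.

Lemma fourier_indE d (pi : G -> 'M[R[i]]_d) (A : set G) :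
  fourier_ind m pi A = mx_Rintegral m A (fun t => adjmx (pi t)).
Proof.
apply/matrixP => i j; rewrite !mxE.
by congr (_ +i* _)%C; apply: eq_Rintegral => t _; rewrite !mxE.
Qed.

Lemma opnorm_fourier_ind_le d (pi : G -> 'M[R[i]]_d) (A : set G) :
  unitary_rep mul e pi -> borel_set A -> (m A < +oo)%E ->
  (opnorm (fourier_ind m pi A) <= m A)%E.
Proof.
move=> [_ _ unit_pi cont_pi] mA mAoo; rewrite fourier_indE.
apply: opnorm_mx_Rintegral_le => // [i j|t v _]; last first.
  by rewrite sqnorm_adjmx_unitary.
have [cRe cIm] := cont_pi j i.
split; apply: continuous_integrable => //.
- suff -> : (fun t => Re (adjmx (pi t) i j)) = fun t => Re (pi t j i) by [].
  by apply/funext => t; rewrite !mxE ReJ_complex.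
- suff -> : (fun t => Im (adjmx (pi t) i j)) = fun t => - Im (pi t j i).
    by move=> t; apply: continuousN; exact: cIm.
  by apply/funext => t; rewrite !mxE ImJ_complex.
Qed.

Lemma trivial_rep_irreducible :
  irreducible_unitary_rep mul e (fun=> 1%:M : 'M[R[i]]_1).
Proof.
split=> // [|U _].
  split=> // [x y|x|i j]; first by rewrite mul1mx.
    by rewrite map_scalar_mx rmorph1 tr_scalar_mx mul1mx.
  by split; exact: cst_continuous.
have [->|U0] := eqVneq U 0; first by left; rewrite submx_refl.
right; rewrite submx1 sub1mx /row_full.
rewrite -mxrank_eq0 in U0.
by have := rank_leq_row U; case: (\rank U) U0 => [|[|]].
Qed.

Lemma nu_norm_le (A : set G) :
  borel_set A -> (m A < +oo)%E -> (nu_norm mul e m A <= m A)%E.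
Proof.
move=> mA mAoo; apply: ge_ereal_sup => _ [d [pi [[unit_pi _ _] ->]]].
exact: opnorm_fourier_ind_le.
Qed.

Lemma fourier_ind_trivial (A : set G) : borel_set A ->
  fourier_ind m (fun=> 1%:M : 'M[R[i]]_1) A = (fine (m A) +i* 0)%C%:M.
Proof.
move=> mA; apply/matrixP => i j; rewrite !ord1 !mxE eqxx /=.
by rewrite mulr1n !Rintegral_cst // mul1r oppr0 mul0r.
Qed.

Lemma nu_norm_ge (A : set G) :
  borel_set A -> (m A < +oo)%E -> (m A <= nu_norm mul e m A)%E.
Proof.
move=> mA mAoo.
apply: le_trans (ereal_sup_ubound _); last first.
  by exists 1%N, (fun=> 1%:M); split; first exact: trivial_rep_irreducible.
apply: le_trans (ereal_sup_ubound _); last first.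
  exists 1%:M; last reflexivity.
  by rewrite /= /vnorm big_ord1 mxE eqxx /= expr1n expr0n addr0 sqrtr1.
rewrite fourier_ind_trivial // mulmx1 /vnorm big_ord1 mxE eqxx /= expr0n addr0.
by rewrite sqrtr_sqr ger0_norm ?fine_ge0 // fineK // ge0_fin_numE.
Qed.

Lemma nu_normE (A : set G) :
  borel_set A -> (m A < +oo)%E -> nu_norm mul e m A = m A.
Proof.
by move=> mA mAoo; apply/eqP; rewrite eq_le nu_norm_le // nu_norm_ge.
Qed.

Lemma nu_variationE (A : set G) :
  borel_set A -> (m A < +oo)%E -> nu_variation mul e m A = m A.
Proof.
move=> mA mAoo; apply/eqP; rewrite eq_le; apply/andP; split.
- apply: ge_ereal_sup => _ [n [E [mE disjE defA ->]]].
  have mEk_lty k : (m (E k) < +oo)%E.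
    have EkA : E k `<=` A by rewrite -defA; exact: bigcup_sup.
    by apply: le_lt_trans mAoo; rewrite le_measure ?inE //; exact: mE.
  rewrite (eq_bigr (fun k => m (E k))) => [|k _]; last exact: nu_normE.
  have -> : A = \big[setU/set0]_(k < n) E k.
    rewrite -defA -bigcup_seq; apply: eq_bigcupl.
    by split=> k //= _; exact: mem_index_enum.
  rewrite measure_bigsetU_ord // => i j _ _ [x [Eix Ejx]].
  apply/eqP; apply: contraT => /disjE ij0.
  by have : (E i `&` E j) x by []; rewrite ij0.
- apply: ereal_sup_ubound; exists 1%N, (fun=> A); split => //.
  + by move=> k l; rewrite !ord1 eqxx.
  + by apply/seteqP; split=> [x [] | x Ax] //; exists ord0.
  + by rewrite big_ord1 nu_normE.
Qed.

End CompactGroup.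

Unset Implicit Arguments.

Theorem lemma3p1 (R : realType) (G : ptopologicalType)
  (mul : G -> G -> G) (inv : G -> G) (e : G)
  (m : {measure set (borel G) -> \bar R}) (Phi : R -> \bar R) :
  compact_hausdorff_group mul inv e ->
  normalized_haar mul m ->
  young_function Phi -> delta2 Phi ->
  (nu_variation mul e m setT < +oo)%E /\
  (forall A : set G, borel_set A -> nu_variation mul e m A = m A).
Proof.
move=> [_ _ _ _ [_ compactG]] [m1 _ _ _] _ _.
have mT : borel_set [set: G] := measurableT.
have m_lty A : borel_set A -> (m A < +oo)%E.
  move=> mA; apply: (@le_lt_trans _ _ (m setT)); last by rewrite m1 ltry.
  by rewrite le_measure ?inE.
have variationE A : borel_set A -> nu_variation mul e m A = m A.
  by move=> mA; rewrite nu_variationE ?m_lty.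
by split=> //; rewrite variationE // m1 ltry.
Qed.
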